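(* If $\mathcal{A}$ is a $(\kappa,\beta)$-single-parameter family of greedy heuristics for an object assignment problem with $n$ objects, and $\mathrm{cost}(A,x)$ is the objective value of the solution produced by $A$ on instance $x$, then the pseudo-dimension of $\mathcal{A}$ (as the class of functions $x\mapsto\mathrm{cost}(A,x)$) is $O(\log(\kappa\beta n))$.
   Context: Object assignment problem: an instance is a set of $n$ objects, each with attributes (an element $\xi$ of an abstract set); a feasible solution assigns each object a value in a finite set $R$ subject to feasibility constraints. Greedy heuristic: while unassigned objects remain, compute a score $\sigma(\xi_i)$ for each unassigned object $i$ from its current attributes $\xi_i$; take the unassigned object with highest score (ties broken lexicographically), and use an assignment rule to assign it a value in $R$ (some feasible choice always exists) and possibly update the attributes of other unassigned objects. A single-parameter family of scoring rules is a function $\sigma(\rho,\xi)$ for $\rho$ in an interval $I\subseteq\mathbb{R}$, continuous in $\rho$ for each fixed $\xi$; it is $\kappa$-crossing if for every pair of distinct attributes $\xi\neq\xi'$ there are at most $\kappa$ values of $\rho$ with $\sigma(\rho,\xi)=\sigma(\rho,\xi')$. An assignment rule is $\beta$-bounded if every object takes on at most $\beta$ distinct attribute values (over all executions). A $(\kappa,\beta)$-single-parameter family of greedy heuristics couples a $\kappa$-crossing single-parameter family of scoring rules with a fixed $\beta$-bounded assignment rule, giving one heuristic per $\rho\in I$. Pseudo-dimension: a finite set $\{x_1,\dots,x_m\}$ is shattered by a class $\mathcal{H}$ of real functions if there exist reals $r_1,\dots,r_m$ such that for every $T\subseteq\{1,\dots,m\}$ some $h\in\mathcal{H}$ has $h(x_i)>r_i\iff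 i\in T$; the pseudo-dimension is the largest size of a shattered set. *)

From Stdlib Require Import Reals List Arith.
From Stdlib Require Import FinFun.
Import ListNotations.
Open Scope R_scope.

Set Implicit Arguments.

Definition is_interval (I : R -> Prop) : Prop :=
  forall a b c, I a -> I c -> a <= b -> b <= c -> I b.

Definition continuous_on (I : R -> Prop) (f : R -> R) : Prop :=
  forall r, I r -> forall eps, 0 < eps -> exists delta, 0 < delta /\
    forall r', I r' -> Rabs (r' - r) < delta -> Rabs (f r' - f r) < eps.

Definition single_param_scoring (Xi : Type) (I : R -> Prop) (sigma : R -> Xi -> R) : Prop :=
  is_interval I /\ forall xi, continuous_on I (fun rho => sigma rho xi).

Definition kappa_crossing (Xi : Type) (I : R -> Prop) (sigma : R -> Xi -> R) (kappa : nat) : Prop :=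
  forall xi xi', xi <> xi' ->
    exists L : list R, (length L <= kappa)%nat /\
      forall rho, I rho -> sigma rho xi = sigma rho xi' -> In rho L.

Definition assignedb (Rv : Type) (asg : list (nat * Rv)) (j : nat) : bool :=
  existsb (fun p => Nat.eqb (fst p) j) asg.

Fixpoint lookup (Rv : Type) (asg : list (nat * Rv)) (j : nat) : option Rv :=
  match asg with
  | [] => None
  | (i, r) :: l => if Nat.eqb i j then Some r else lookup l j
  end.

(** Index among 0..k-1 satisfying ok with highest score; ties broken in
    favour of the lexicographically smallest (i.e. smallest) index. *)
Fixpoint best (sc : nat -> R) (ok : nat -> bool) (k : nat) : option nat :=
  match k with
  | O => None
  | S k' =>
      match best sc ok k' with
      | None => if ok k' then Some k' else None
      | Some j => if ok k' then (if Rlt_dec (sc j) (sc k') then Some k' else Some j)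
                  else Some j
      end
  end.

Definition gstate (Xi Rv : Type) : Type := (list (nat * Rv) * (nat -> Xi))%type.

(** One step of the greedy heuristic with score parameter rho and assignment
    rule [rule] (given the instance, the partial assignment, current attributes
    and the chosen object, it returns the value assigned to the chosen object and
    the updated attributes; only attributes of other unassigned objects change). *)
Definition gstep (Xi Rv X : Type) (n : nat) (sigma : R -> Xi -> R)
    (rule : X -> list (nat * Rv) -> (nat -> Xi) -> nat -> Rv * (nat -> Xi))
    (rho : R) (x : X) (s : gstate Xi Rv) : gstate Xi Rv :=
  let (asg, att) := s in
  match best (fun i => sigma rho (att i)) (fun i => negb (assignedb asg i)) n with
  | None => s
  | Some i =>
      let (r, att') := rule x asg att i in
      (asg ++ [(i, r)],
       fun j => if andb (negb (assignedb asg j)) (negb (Nat.eqb j i)) then att' j else att j)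
  end.

Definition gstate_at (Xi Rv X : Type) (n : nat) (sigma : R -> Xi -> R)
    (rule : X -> list (nat * Rv) -> (nat -> Xi) -> nat -> Rv * (nat -> Xi))
    (init : X -> nat -> Xi) (rho : R) (x : X) (t : nat) : gstate Xi Rv :=
  Nat.iter t (gstep n sigma rule rho x) ([], init x).

(** Solution produced: the value assigned to each object (after n steps every
    object j < n is assigned). *)
Definition gsolution (Xi Rv X : Type) (n : nat) (sigma : R -> Xi -> R)
    (rule : X -> list (nat * Rv) -> (nat -> Xi) -> nat -> Rv * (nat -> Xi))
    (init : X -> nat -> Xi) (rho : R) (x : X) : nat -> option Rv :=
  lookup (fst (gstate_at n sigma rule init rho x n)).

Definition beta_bounded (Xi Rv X : Type) (n : nat) (I : R -> Prop) (sigma : R -> Xi -> R)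
    (rule : X -> list (nat * Rv) -> (nat -> Xi) -> nat -> Rv * (nat -> Xi))
    (init : X -> nat -> Xi) (beta : nat) : Prop :=
  forall x i, (i < n)%nat ->
    exists L : list Xi, (length L <= beta)%nat /\
      forall rho t, I rho -> (t <= n)%nat ->
        In (snd (gstate_at n sigma rule init rho x t) i) L.

Definition shattered (X : Type) (I : R -> Prop) (f : R -> X -> R) (xs : list X) : Prop :=
  NoDup xs /\
  exists r : X -> R, forall T : X -> bool,
    exists rho, I rho /\ forall x, In x xs -> (f rho x > r x <-> T x = true).

Definition pdim_le (X : Type) (I : R -> Prop) (f : R -> X -> R) (d : R) : Prop :=
  forall xs, shattered I f xs -> INR (length xs) <= d.

(** Fix [m] shattered instances. All attributes that the heuristic ever
    sees on them lie in a list [V] of length at most [m n beta]; the scores of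
    two distinct elements of [V] coincide at no more than [kappa] parameters,
    giving a list [B] of at most [kappa |V|^2] breakpoints. Between consecutive
    breakpoints no two attributes of [V] swap order (intermediate value
    theorem), so every greedy choice, hence every solution, is unchanged. Thus
    the parameters fall into at most [(|B| + 1)^2] classes with equal
    behaviour, each realizing one labelling, and
    [2^m <= ((m kappa beta n)^2 + 1)^2], i.e. [m = O(log (kappa beta n))]. *)

From Stdlib Require Import Reals List Arith FinFun Lia Lra ClassicalEpsilon Classical.
Import ListNotations.

Local Open Scope nat_scope.

Lemma succ_quartic_le u : 6 <= u -> (u + 1) ^ 4 <= 2 * u ^ 4.
Proof.
  intros Hu; simpl; rewrite !Nat.mul_1_r.
  assert (6 * (u * u * u) <= u * u * u * u) by nia.
  assert (6 * (u * u) <= u * u * u) by nia.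
  assert (6 * u <= u * u) by nia.
  nia.
Qed.

Lemma quartic_le_exp2 j : (2 * j + 2) ^ 4 <= 2 ^ (j + 10).
Proof.
  induction j as [|j IH]; [apply Nat.leb_le; reflexivity|].
  destruct (Nat.lt_ge_cases j 5) as [Hj|Hj].
  - destruct j as [|[|[|[|[|j]]]]]; try lia; apply Nat.leb_le; reflexivity.
  - replace (2 * S j + 2) with (2 * ((j + 1) + 1)) by lia.
    replace (2 * j + 2) with (2 * (j + 1)) in IH by lia.
    rewrite Nat.pow_mul_l in *; rewrite Nat.add_succ_l, (Nat.pow_succ_r' 2 (j + 10)).
    pose proof (succ_quartic_le (j + 1) ltac:(lia)).
    change (2 ^ 4) with 16 in *.
    set (a := (j + 1) ^ 4) in *; set (b := (j + 1 + 1) ^ 4) in *; lia.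
Qed.

Lemma exp2_le_quartic_log2 m K :
  2 <= K -> 2 ^ m <= ((m * K) ^ 2 + 1) ^ 2 -> m <= 41 * Nat.log2 K.
Proof.
  intros HK Hm.
  destruct (Nat.eq_dec m 0) as [->|Hm0]; [lia|].
  destruct (Nat.log2_spec K) as [_ HK_lt]; [lia|].
  set (k := Nat.log2 K) in *.
  assert (Hk : 1 <= k) by (destruct k; simpl in HK_lt; lia).
  assert (Hhalf : exists j, 2 * j <= m <= 2 * j + 1)
    by (destruct (Nat.Even_or_Odd m) as [[j ->]|[j ->]]; exists j; lia).
  destruct Hhalf as [j Hj].
  assert (HK4 : K ^ 4 <= 2 ^ (8 * k)).
  { replace (8 * k) with (2 * k * 4) by lia; rewrite Nat.pow_mul_r.
    apply Nat.pow_le_mono_l, Nat.lt_le_incl.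
    eapply Nat.lt_le_trans; [exact HK_lt|]; apply Nat.pow_le_mono_r; lia. }
  assert (Hm4 : m ^ 4 <= 2 ^ (j + 10)).
  { eapply Nat.le_trans; [apply (Nat.pow_le_mono_l m (2 * j + 2)); lia|].
    apply quartic_le_exp2. }
  assert (Hsq : ((m * K) ^ 2 + 1) ^ 2 <= 2 ^ 2 * (m ^ 4 * K ^ 4)).
  { assert (1 <= (m * K) ^ 2) by (apply Nat.pow_le_mono_l with (c := 2) (a := 1); nia).
    replace (m ^ 4 * K ^ 4) with ((m * K) ^ 2 * (m * K) ^ 2)
      by (rewrite <- Nat.pow_add_r, Nat.pow_mul_l; reflexivity).
    set (a := (m * K) ^ 2) in *; simpl; nia. }
  assert (H2j : 2 ^ (2 * j) <= 2 ^ (2 + ((j + 10) + 8 * k))).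
  { rewrite (Nat.pow_add_r 2 2), (Nat.pow_add_r 2 (j + 10)).
    apply Nat.le_trans with (2 ^ m); [apply Nat.pow_le_mono_r; lia|].
    eapply Nat.le_trans; [exact Hm|]; eapply Nat.le_trans; [exact Hsq|].
    apply Nat.mul_le_mono_l, Nat.mul_le_mono; assumption. }
  apply Nat.pow_le_mono_r_iff in H2j; lia.
Qed.

Local Open Scope R_scope.

Lemma log2_ln2_le_ln K : (1 <= K)%nat -> INR (Nat.log2 K) * ln 2 <= ln (INR K).
Proof.
  intros HK.
  destruct (Nat.log2_spec K) as [Hlow _]; [lia|].
  rewrite <- ln_pow by lra.
  replace (2 ^ Nat.log2 K) with (INR (2 ^ Nat.log2 K)) by (rewrite pow_INR; reflexivity).
  apply le_INR in Hlow.
  assert (0 < INR (2 ^ Nat.log2 K)) by (apply lt_0_INR, Nat.neq_0_lt_0, Nat.pow_nonzero; lia).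
  destruct Hlow as [Hlt| ->]; [left; apply ln_increasing; assumption|right; reflexivity].
Qed.

Lemma list_cover {A Y : Type} (Q : A -> Y -> Prop) (b : nat) (l : list A) :
  (forall a, In a l -> exists L, (length L <= b)%nat /\ forall y, Q a y -> In y L) ->
  exists V, (length V <= length l * b)%nat /\ forall a y, In a l -> Q a y -> In y V.
Proof.
  induction l as [|a l IH]; intros Hcov.
  - exists []; split; [simpl; lia|]; intros ? ? [].
  - destruct IH as [V [HV HVQ]]; [intros; apply Hcov; right; assumption|].
    destruct (Hcov a (or_introl eq_refl)) as [L [HL HLQ]].
    exists (L ++ V); split; [rewrite length_app; simpl; lia|].
    intros a' y [<-|Ha'] HQ; apply in_or_app; [left|right]; eauto.
Qed.

Lemma filter_length_lt {A : Type} (p q : A -> bool) (l : list A) (c : A) :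
  (forall a, p a = true -> q a = true) -> In c l -> p c = false -> q c = true ->
  (length (filter p l) < length (filter q l))%nat.
Proof.
  intros Hpq; induction l as [|a l IH]; intros Hc Hp Hq; [destruct Hc|].
  assert (Hle : (length (filter p l) <= length (filter q l))%nat).
  { clear IH Hc; induction l as [|d l IHl]; simpl; [lia|].
    destruct (p d) eqn:E; [rewrite (Hpq _ E); simpl; lia|destruct (q d); simpl; lia]. }
  simpl; destruct Hc as [->|Hc].
  - rewrite Hp, Hq; simpl; lia.
  - specialize (IH Hc Hp Hq).
    destruct (p a) eqn:E; [rewrite (Hpq _ E); simpl; lia|destruct (q a); simpl; lia].
Qed.

Fixpoint bool_lists (m : nat) : list (list bool) :=
  match m with
  | O => [[]]
  | S m' => map (cons true) (bool_lists m') ++ map (cons false) (bool_lists m')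
  end.

Lemma length_bool_lists m : length (bool_lists m) = (2 ^ m)%nat.
Proof. induction m; simpl; [reflexivity|]; rewrite length_app, !length_map, IHm; lia. Qed.

Lemma in_bool_lists_length m l : In l (bool_lists m) -> length l = m.
Proof.
  revert l; induction m; simpl; intros l H.
  - destruct H as [<-|[]]; reflexivity.
  - apply in_app_or in H; destruct H as [H|H]; apply in_map_iff in H;
      destruct H as [l' [<- H]]; simpl; rewrite (IHm _ H); reflexivity.
Qed.

Lemma NoDup_bool_lists m : NoDup (bool_lists m).
Proof.
  induction m; simpl; [repeat constructor; intros []|].
  apply NoDup_app;
    try (apply Injective_map_NoDup; [intros a b E; injection E; auto|exact IHm]).
  intros l H1 H2; apply in_map_iff in H1, H2.
  destruct H1 as [? [<- _]], H2 as [? [E _]]; discriminate.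
Qed.

Fixpoint index_of {X : Type} (xs : list X) (x : X) : nat :=
  match xs with
  | [] => O
  | y :: ys => if excluded_middle_informative (y = x) then O else S (index_of ys x)
  end.

Lemma index_of_nth {X : Type} (xs : list X) d i :
  NoDup xs -> (i < length xs)%nat -> index_of xs (nth i xs d) = i.
Proof.
  revert i; induction xs as [|y ys IH]; intros i Hnd Hi; simpl in Hi; [lia|].
  inversion Hnd as [|? ? Hy Hnd']; subst.
  destruct i as [|i]; simpl; destruct excluded_middle_informative as [E|E]; try congruence.
  - exfalso; apply Hy; rewrite E; apply nth_In; lia.
  - rewrite IH; auto; lia.
Qed.

Lemma labels_ext {X : Type} (xs : list X) (l1 l2 : list bool) :
  NoDup xs -> length l1 = length xs -> length l2 = length xs ->
  (forall x, In x xs -> nth (index_of xs x) l1 false = nth (index_of xs x) l2 false) ->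
  l1 = l2.
Proof.
  intros Hnd H1 H2 Hl; apply (nth_ext _ _ false false); [congruence|].
  intros i Hi; destruct xs as [|x0 xs0]; [simpl in *; lia|].
  specialize (Hl (nth i (x0 :: xs0) x0) ltac:(apply nth_In; lia)).
  rewrite index_of_nth in Hl by (auto; lia); exact Hl.
Qed.

Lemma shattered_card {X Y : Type} (I : R -> Prop) (f : R -> X -> R) (xs : list X)
    (g : R -> Y) (G : list Y) :
  (forall rho, I rho -> In (g rho) G) ->
  (forall rho1 rho2, I rho1 -> I rho2 -> g rho1 = g rho2 ->
     forall x, In x xs -> f rho1 x = f rho2 x) ->
  shattered I f xs -> (2 ^ length xs <= length G)%nat.
Proof.
  intros HG Hg [Hnd [r Hsh]].
  set (label := fun (l : list bool) x => nth (index_of xs x) l false).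
  set (F := fun l => proj1_sig (constructive_indefinite_description _ (Hsh (label l)))).
  assert (HF : forall l, I (F l) /\
      forall x, In x xs -> (f (F l) x > r x <-> label l x = true)).
  { intro l; unfold F; destruct constructive_indefinite_description as [rho Hrho]; exact Hrho. }
  assert (Hinj : forall l1 l2, In l1 (bool_lists (length xs)) -> In l2 (bool_lists (length xs)) ->
      g (F l1) = g (F l2) -> l1 = l2).
  { intros l1 l2 H1 H2 E.
    destruct (HF l1) as [I1 P1], (HF l2) as [I2 P2].
    apply (labels_ext xs); auto using in_bool_lists_length.
    intros x Hx; specialize (P1 x Hx); specialize (P2 x Hx).
    rewrite (Hg _ _ I1 I2 E x Hx) in P1; fold (label l1 x) (label l2 x).
    destruct (label l1 x), (label l2 x); intuition. }
  rewrite <- length_bool_lists, <- (length_map (fun l => g (F l))).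
  apply NoDup_incl_length.
  - apply Injective_map_NoDup_in; [exact Hinj|apply NoDup_bool_lists].
  - intros y Hy; apply in_map_iff in Hy; destruct Hy as [l [<- _]]; apply HG, HF.
Qed.

Lemma continuous_on_minus (I : R -> Prop) f g :
  continuous_on I f -> continuous_on I g -> continuous_on I (fun r => f r - g r).
Proof.
  intros Hf Hg r Ir eps He.
  destruct (Hf r Ir (eps / 2) ltac:(lra)) as [d1 [Hd1 H1]].
  destruct (Hg r Ir (eps / 2) ltac:(lra)) as [d2 [Hd2 H2]].
  exists (Rmin d1 d2); split; [apply Rmin_pos; lra|].
  intros r' Ir' Hr.
  assert (A1 := H1 r' Ir' ltac:(pose proof (Rmin_l d1 d2); lra)).
  assert (A2 := H2 r' Ir' ltac:(pose proof (Rmin_r d1 d2); lra)).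
  revert A1 A2; split_Rabs; lra.
Qed.

Definition clamp (a b r : R) : R := Rmax a (Rmin b r).

Lemma clamp_in a b r : a <= b -> a <= clamp a b r <= b.
Proof. intros; unfold clamp, Rmax, Rmin; repeat destruct Rle_dec; lra. Qed.

Lemma clamp_id a b r : a <= r <= b -> clamp a b r = r.
Proof. intros; unfold clamp, Rmax, Rmin; repeat destruct Rle_dec; lra. Qed.

Lemma clamp_lipschitz a b x y : a <= b -> Rabs (clamp a b y - clamp a b x) <= Rabs (y - x).
Proof. intros; unfold clamp, Rmax, Rmin; repeat destruct Rle_dec; split_Rabs; lra. Qed.

Lemma continuity_clamp (I : R -> Prop) f a b :
  is_interval I -> I a -> I b -> a <= b ->
  continuous_on I f -> continuity (fun r => f (clamp a b r)).
Proof.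
  intros HI Ia Ib Hab Hf x eps He.
  assert (HIc : forall r, I (clamp a b r))
    by (intros r; destruct (clamp_in a b r Hab); eapply HI; [exact Ia|exact Ib|lra|lra]).
  destruct (Hf _ (HIc x) eps He) as [d [Hd Hd']].
  exists d; split; [lra|]; intros y [_ Hy]; simpl in *; unfold R_dist in *.
  apply Hd'; [apply HIc|].
  eapply Rle_lt_trans; [apply clamp_lipschitz; exact Hab|exact Hy].
Qed.

(* [I] need not be open, so continuity is only relative to [I]; clamping to
   [[a, b]] gives a function continuous on all of [R], as [IVT] requires. *)
Lemma IVT_on (I : R -> Prop) f a b :
  is_interval I -> I a -> I b -> a <= b -> continuous_on I f ->
  f a < 0 -> 0 < f b -> exists z, a <= z <= b /\ f z = 0.
Proof.
  intros HI Ia Ib Hab Hf Ha Hb.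
  assert (Hlt : a < b) by (destruct Hab as [|<-]; [assumption|lra]).
  destruct (IVT _ a b (continuity_clamp I f a b HI Ia Ib Hab Hf) Hlt) as [z [Hz Ez]];
    rewrite ?clamp_id by lra; try assumption.
  exists z; rewrite clamp_id in Ez by lra; auto.
Qed.

Lemma score_order_stable {Xi : Type} (I : R -> Prop) (sigma : R -> Xi -> R) a b rho1 rho2 :
  single_param_scoring I sigma -> I rho1 -> I rho2 -> rho1 <= rho2 ->
  (forall c, rho1 <= c <= rho2 -> sigma c a <> sigma c b) ->
  (sigma rho1 a < sigma rho1 b <-> sigma rho2 a < sigma rho2 b).
Proof.
  intros [HI Hcont] I1 I2 H12 Hnc.
  assert (Hpres : forall a b, (forall c, rho1 <= c <= rho2 -> sigma c a <> sigma c b) ->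
      sigma rho1 a < sigma rho1 b -> sigma rho2 a < sigma rho2 b).
  { intros a' b' Hnc' H1; apply Rnot_le_lt; intros H2.
    destruct (IVT_on I (fun r => sigma r a' - sigma r b') rho1 rho2 HI I1 I2 H12)
      as [z [Hz Ez]]; try lra.
    - apply continuous_on_minus; apply Hcont.
    - destruct H2 as [H2|H2]; [lra|exfalso; apply (Hnc' rho2); [lra|auto]].
    - apply (Hnc' z Hz); lra. }
  split; [apply Hpres, Hnc|].
  intros H2; destruct (total_order_T (sigma rho1 a) (sigma rho1 b)) as [[H1|H1]|H1].
  - exact H1.
  - exfalso; apply (Hnc rho1); [lra|exact H1].
  - exfalso; assert (sigma rho2 b < sigma rho2 a); [|lra].
    apply Hpres; [intros c Hc E; apply (Hnc c Hc); auto|exact H1].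
Qed.

Definition count_lt (B : list R) (rho : R) : nat :=
  length (filter (fun c => if Rlt_dec c rho then true else false) B).

Definition count_le (B : list R) (rho : R) : nat :=
  length (filter (fun c => if Rle_dec c rho then true else false) B).

Lemma count_le_length B rho : (count_lt B rho <= length B /\ count_le B rho <= length B)%nat.
Proof. split; apply filter_length_le. Qed.

(* The pair [(count_lt B rho, count_le B rho)] locates [rho] among the points
   of [B], distinguishing [rho] lying on a point from [rho] lying next to it. *)
Lemma counts_eq_no_point B rho1 rho2 c :
  rho1 < rho2 -> count_lt B rho1 = count_lt B rho2 -> count_le B rho1 = count_le B rho2 ->
  rho1 <= c <= rho2 -> ~ In c B.
Proof.
  intros H12 Elt Ele Hc HcB; destruct (Req_dec c rho1) as [->|Hne].
  - enough (count_lt B rho1 < count_lt B rho2)%nat by lia.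
    apply (filter_length_lt _ _ B rho1); auto;
      [intros c; destruct Rlt_dec, Rlt_dec; auto; lra|..]; destruct Rlt_dec; auto; lra.
  - enough (count_le B rho1 < count_le B rho2)%nat by lia.
    apply (filter_length_lt _ _ B c); auto;
      [intros c'; destruct Rle_dec, Rle_dec; auto; lra|..]; destruct Rle_dec; auto; lra.
Qed.

Lemma best_lt sc ok k j : best sc ok k = Some j -> (j < k)%nat.
Proof.
  revert j; induction k as [|k IH]; intros j H; simpl in H; [discriminate|].
  destruct (best sc ok k) as [j'|] eqn:E.
  - specialize (IH j' eq_refl).
    destruct (ok k); [destruct Rlt_dec|]; injection H as <-; lia.
  - destruct (ok k); [injection H as <-; lia|discriminate].
Qed.

Lemma best_ext sc1 sc2 ok k :
  (forall j l, (j < k)%nat -> (l < k)%nat -> j <> l -> (sc1 j < sc1 l <-> sc2 j < sc2 l)) ->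
  best sc1 ok k = best sc2 ok k.
Proof.
  induction k as [|k IH]; intros H; [reflexivity|]; simpl.
  rewrite IH by (intros; apply H; lia).
  destruct (best sc2 ok k) as [j|] eqn:E; [|reflexivity].
  pose proof (best_lt _ _ _ _ E).
  destruct (ok k); [|reflexivity].
  specialize (H j k ltac:(lia) ltac:(lia) ltac:(lia)).
  destruct (Rlt_dec (sc1 j) (sc1 k)), (Rlt_dec (sc2 j) (sc2 k)); tauto.
Qed.

Section Greedy.

Variables (Xi Rv X : Type) (n : nat) (I : R -> Prop) (sigma : R -> Xi -> R)
  (rule : X -> list (nat * Rv) -> (nat -> Xi) -> nat -> Rv * (nat -> Xi))
  (init : X -> nat -> Xi).

Local Notation attr rho x t := (snd (gstate_at n sigma rule init rho x t)).
Local Notation solution rho x := (gsolution n sigma rule init rho x).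

Lemma gstate_at_ext x rho1 rho2 :
  (forall t j l, (t < n)%nat -> (j < n)%nat -> (l < n)%nat -> j <> l ->
     (sigma rho1 (attr rho1 x t j) < sigma rho1 (attr rho1 x t l) <->
      sigma rho2 (attr rho1 x t j) < sigma rho2 (attr rho1 x t l))) ->
  forall t, (t <= n)%nat ->
    gstate_at n sigma rule init rho1 x t = gstate_at n sigma rule init rho2 x t.
Proof.
  intros Hord t; induction t as [|t IH]; intros Ht; [reflexivity|].
  unfold gstate_at; simpl; fold (gstate_at n sigma rule init rho1 x t)
    (gstate_at n sigma rule init rho2 x t).
  rewrite <- IH by lia.
  specialize (Hord t); destruct (gstate_at n sigma rule init rho1 x t) as [asg att].
  unfold gstep; rewrite (best_ext _ (fun i => sigma rho2 (att i))); [reflexivity|].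
  intros; apply Hord; assumption || lia.
Qed.

Lemma gsolution_single_object x rho1 rho2 : (n <= 1)%nat -> solution rho1 x = solution rho2 x.
Proof.
  intros Hn; unfold gsolution; rewrite (gstate_at_ext x rho1 rho2); [reflexivity| |lia].
  intros; lia.
Qed.

Lemma gsolution_stable x rho1 rho2 (V : list Xi) :
  single_param_scoring I sigma -> I rho1 -> I rho2 -> rho1 <= rho2 ->
  (forall t i, (t < n)%nat -> (i < n)%nat -> In (attr rho1 x t i) V) ->
  (forall a b c, In a V -> In b V -> a <> b -> rho1 <= c <= rho2 -> sigma c a <> sigma c b) ->
  solution rho1 x = solution rho2 x.
Proof.
  intros Hsc I1 I2 H12 HV Hcross.
  unfold gsolution; rewrite (gstate_at_ext x rho1 rho2); [reflexivity| |lia].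
  intros t j l Ht Hj Hl _.
  destruct (classic (attr rho1 x t j = attr rho1 x t l)) as [E|E];
    [rewrite E; split; lra|].
  apply (score_order_stable I); auto.
Qed.

Lemma gsolution_eq_of_counts x rho1 rho2 (V : list Xi) (B : list R) :
  single_param_scoring I sigma -> I rho1 -> I rho2 ->
  (forall rho t i, I rho -> (t < n)%nat -> (i < n)%nat -> In (attr rho x t i) V) ->
  (forall a b c, In a V -> In b V -> a <> b -> I c -> sigma c a = sigma c b -> In c B) ->
  count_lt B rho1 = count_lt B rho2 -> count_le B rho1 = count_le B rho2 ->
  solution rho1 x = solution rho2 x.
Proof.
  intros Hsc I1 I2 HV HB.
  assert (Hhalf : forall r1 r2, I r1 -> I r2 -> r1 < r2 ->
      count_lt B r1 = count_lt B r2 -> count_le B r1 = count_le B r2 ->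
      solution r1 x = solution r2 x).
  { intros r1 r2 Ir1 Ir2 H12 Elt Ele.
    apply (gsolution_stable x r1 r2 V); auto; [lra|].
    intros a b c Ha Hb Hab Hc E; apply (counts_eq_no_point B r1 r2 c); auto.
    apply (HB a b c); auto.
    destruct Hsc as [HI _]; eapply HI; [exact Ir1|exact Ir2|lra|lra]. }
  intros Elt Ele; destruct (Rtotal_order rho1 rho2) as [H|[<-|H]]; auto.
  symmetry; apply Hhalf; auto.
Qed.

Lemma greedy_shatter_count (kappa beta : nat) (cost : X -> (nat -> option Rv) -> R)
    (xs : list X) :
  single_param_scoring I sigma -> kappa_crossing I sigma kappa ->
  beta_bounded n I sigma rule init beta ->
  shattered I (fun rho x => cost x (solution rho x)) xs ->
  (2 ^ length xs <= ((length xs * (kappa * beta * n)) ^ 2 + 1) ^ 2)%nat.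
Proof.
  intros Hsc Hk Hb Hsh.
  destruct (list_cover (fun p y => exists rho t, I rho /\ (t <= n)%nat /\
              y = attr rho (fst p) t (snd p)) beta (list_prod xs (seq 0 n)))
    as [V [HVlen HV]].
  { intros [x i] Hxi; apply in_prod_iff in Hxi; destruct Hxi as [_ Hi]; apply in_seq in Hi.
    destruct (Hb x i ltac:(lia)) as [L [HL HLin]].
    exists L; split; [exact HL|]; intros y (rho & t & Ir & Ht & ->); apply HLin; auto. }
  destruct (list_cover (fun p c => fst p <> snd p /\ I c /\ sigma c (fst p) = sigma c (snd p))
              kappa (list_prod V V)) as [B [HBlen HB]].
  { intros [a b] _; destruct (classic (a = b)) as [<-|Hab].
    - exists []; split; [simpl; lia|]; intros c [E _]; contradiction.
    - destruct (Hk a b Hab) as [L [HL HLin]].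
      exists L; split; [exact HL|]; intros c (_ & Ic & E); apply HLin; auto. }
  rewrite length_prod, length_seq in HVlen; rewrite length_prod in HBlen.
  eapply Nat.le_trans.
  { apply (shattered_card I (fun rho x => cost x (solution rho x)) xs (fun rho => (count_lt B rho, count_le B rho))
             (list_prod (seq 0 (S (length B))) (seq 0 (S (length B))))); [| |exact Hsh].
    - intros rho _; pose proof (count_le_length B rho); apply in_prod; apply in_seq; lia.
    - intros rho1 rho2 I1 I2 E x Hx; injection E as Elt Ele; f_equal.
      apply (gsolution_eq_of_counts x rho1 rho2 V B); auto.
      + intros rho t i Ir Ht Hi; apply (HV (x, i)); [apply in_prod, in_seq; auto; lia|].
        exists rho, t; repeat split; auto; lia.
      + intros a b c Ha Hb' Hab Ic E; apply (HB (a, b)); [apply in_prod|]; auto. }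
  rewrite length_prod, length_seq, <- Nat.pow_2_r; apply Nat.pow_le_mono_l.
  assert (length V * length V <= (length xs * n * beta) * (length xs * n * beta))%nat
    by (apply Nat.mul_le_mono; exact HVlen).
  assert (kappa <= kappa * kappa)%nat by nia.
  set (w := (length xs * n * beta)%nat) in *.
  replace (length xs * (kappa * beta * n))%nat with (w * kappa)%nat by (unfold w; ring).
  rewrite Nat.pow_2_r; nia.
Qed.

End Greedy.

Theorem mainTheorem2 :
  exists C : R, 0 < C /\
  forall (Xi Rv X : Type) (n kappa beta : nat) (I : R -> Prop)
    (sigma : R -> Xi -> R)
    (rule : X -> list (nat * Rv) -> (nat -> Xi) -> nat -> Rv * (nat -> Xi))
    (init : X -> nat -> Xi)
    (feasible : X -> (nat -> option Rv) -> Prop)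
    (cost : X -> (nat -> option Rv) -> R),
    Finite Rv ->
    single_param_scoring I sigma ->
    kappa_crossing I sigma kappa ->
    beta_bounded n I sigma rule init beta ->
    (forall rho x, I rho -> feasible x (gsolution n sigma rule init rho x)) ->
    (1 <= kappa * beta * n)%nat ->
    pdim_le I (fun rho x => cost x (gsolution n sigma rule init rho x))
      (C * ln (INR (kappa * beta * n))).
Proof.
  assert (Hln2 : 0 < ln 2) by (rewrite <- ln_1; apply ln_increasing; lra).
  exists (41 / ln 2); split; [apply Rdiv_lt_0_compat; lra|].
  (* Neither the finiteness of the value set nor feasibility enters the bound. *)
  intros Xi Rv X n kappa beta I sigma rule init _ cost _ Hsc Hk Hb _ HK xs Hsh.
  set (K := (kappa * beta * n)%nat) in *.
  destruct (Nat.eq_dec K 1) as [K1|K2].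
  - assert (Hcard : (2 ^ length xs <= 1)%nat).
    { refine (shattered_card _ _ _ (fun _ => tt) [tt] _ _ Hsh); [left; reflexivity|].
      intros; f_equal; apply gsolution_single_object.
      apply Nat.eq_mul_1 in K1; lia. }
    apply (Nat.pow_le_mono_r_iff 2 _ 0) in Hcard; [|lia].
    assert (Hxs : length xs = 0%nat) by lia.
    rewrite Hxs, K1; simpl; rewrite ln_1; lra.
  - assert (Hm : (length xs <= 41 * Nat.log2 K)%nat)
      by (apply exp2_le_quartic_log2; [lia|eapply greedy_shatter_count; eauto]).
    apply le_INR in Hm; rewrite mult_INR in Hm.
    pose proof (log2_ln2_le_ln K HK).
    apply Rmult_le_reg_r with (ln 2); [exact Hln2|].
    replace (41 / ln 2 * ln (INR K) * ln 2) with (41 * ln (INR K)) by (field; lra).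
    replace (INR 41) with 41 in Hm by (simpl; lra).
    nra.
Qed.
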